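(* Assume $N\ge 2$ and $2\beta T>1$. Run the Exponentially Weighted Forecaster (EWF) policy with parameters \[ \gamma=\frac{1}{2\beta T},\qquad \eta=\sqrt{\frac{\log N}{4\beta^2T\log\left(2\beta TN^3+N+2\right)}}. \] Then for every demand sequence $d_1,\dots,d_T\in\mathcal D$, \[ \mathbb E[\mathcal R(T)]\le 4\beta\sqrt{T\log N\log\left(2\beta TN^3+N+2\right)}+2\beta\sqrt{T\log N}+1 . \]
   Context: Fix integers $T\ge1$, $D\ge 1$ and reals $h,b>0$. Let $\mathcal T=\{1,\dots,T\}$, $\mathcal D=\{0,1,\dots,D\}$, let $\mathcal I\subseteq\mathcal D$ with $|\mathcal I|=N$, let $\beta=D\max\{h,b\}$, and let $c(i,d)=h(i-d)^+ + b(d-i)^+$. Logarithms are natural. For $d\in\mathcal D$, $e_d\in\mathbb R^{D+1}$ is the standard basis vector (coordinates indexed by $\{0,\dots,D\}$) with a $1$ in coordinate $d$. For $i\in\mathcal D$, the signal matrix $\mathbb S_i$ is the $(i+1)\times(D+1)$ $0/1$ matrix with rows indexed by $k\in\{1,\dots,i+1\}$ and columns by $d\in\{0,\dots,D\}$, with $\mathbb S_i(k,d)=1$ iff $\min\{i,d\}=k-1$; and $v_i\in\mathbb R^{i+1}$ is defined by $v_i(k)=hi-(h+b)(k-1)$, $k=1,\dots,i+1$. A demand sequence $d_1,\dots,d_T\in\mathcal D$ is fixed arbitrarily in advance (it does not depend on the policy's decisions). EWF policy with parameters $\eta>0$, $\gamma\in(0,1)$: set $W_i(0)=1$ for all $i\in\mathcal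 I$. For $t=1,\dots,T$: let $W(t-1)=\sum_{i\in\mathcal I}W_i(t-1)$ and $p_i(t)=(1-\gamma)\frac{W_i(t-1)}{W(t-1)}+\frac{\gamma}{N}$; draw $I_t\in\mathcal I$ with $\mathbb P(I_t=i\mid I_1,\dots,I_{t-1})=p_i(t)$; observe the sales $\min\{I_t,d_t\}$; for each $i\in\mathcal I$ compute $\tilde c(i,d_t)=\frac{\mathbb 1\{I_t\ge i\}}{\mathbb P_t(I_t\ge i)}\left(v_i^T\mathbb S_ie_{d_t}+\beta\right)$ with $\mathbb P_t(I_t\ge i)=\sum_{j\in\mathcal I,\,j\ge i}p_j(t)$; and set $W_i(t)=W_i(t-1)e^{-\eta\tilde c(i,d_t)}$. The regret is $\mathcal R(T)=\sum_{t\in\mathcal T}c(I_t,d_t)-\min_{i\in\mathcal I}\sum_{t\in\mathcal T}c(i,d_t)$, and the expectation is over the policy's randomization. *)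

From Stdlib Require Import Reals List Lia.
Import ListNotations.
Open Scope R_scope.

Fixpoint sumR (l : list R) : R :=
  match l with [] => 0 | x :: l' => x + sumR l' end.

(* minimum of a nonempty list (0 on the empty list, never used) *)
Fixpoint minR (l : list R) : R :=
  match l with
  | [] => 0
  | [x] => x
  | x :: l' => Rmin x (minR l')
  end.

Definition beta (D : nat) (h b : R) : R := INR D * Rmax h b.

(* c(i,d) = h (i-d)^+ + b (d-i)^+ ; nat subtraction is truncated *)
Definition cost (h b : R) (i d : nat) : R := h * INR (i - d) + b * INR (d - i).

Definition vvec (h b : R) (i k : nat) : R := h * INR i - (h + b) * INR (k - 1).

Definition Smat (i k d : nat) : R := if Nat.eqb (Nat.min i d) (k - 1) then 1 else 0.

Definition signal (h b : R) (i d : nat) : R :=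
  sumR (map (fun k => vvec h b i k * Smat i k d) (seq 1 (i + 1))).

Section EWF.
Variables (D : nat) (h b : R) (Iset : list nat) (dem : nat -> nat)
          (eta gamma : R).

Definition Nn : R := INR (length Iset).

Definition Wsum (W : nat -> R) : R := sumR (map W Iset).

Definition prob_arm (W : nat -> R) (i : nat) : R :=
  (1 - gamma) * (W i / Wsum W) + gamma / Nn.

Definition Pge (W : nat -> R) (i : nat) : R :=
  sumR (map (prob_arm W) (filter (fun j => Nat.leb i j) Iset)).

Definition est_loss (W : nat -> R) (It dt i : nat) : R :=
  (if Nat.leb i It then 1 / Pge W i else 0) * (signal h b i dt + beta D h b).

Definition update (W : nat -> R) (It dt : nat) : nat -> R :=
  fun i => W i * exp (- eta * est_loss W It dt i).

(* probability that the policy plays the path s = [I_t; I_{t+1}; ...]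
   given the weight vector W = W(t-1) *)
Fixpoint path_prob (W : nat -> R) (t : nat) (s : list nat) : R :=
  match s with
  | [] => 1
  | a :: s' => prob_arm W a * path_prob (update W a (dem t)) (S t) s'
  end.

Fixpoint path_cost (t : nat) (s : list nat) : R :=
  match s with
  | [] => 0
  | a :: s' => cost h b a (dem t) + path_cost (S t) s'
  end.

Fixpoint paths (n : nat) : list (list nat) :=
  match n with
  | O => [[]]
  | S n' => flat_map (fun a => map (cons a) (paths n')) Iset
  end.

Definition best_cost (T : nat) : R :=
  minR (map (fun i => sumR (map (fun t => cost h b i (dem t)) (seq 1 T))) Iset).

Definition regret (T : nat) (s : list nat) : R := path_cost 1 s - best_cost T.

Definition expected_regret (T : nat) : R :=
  sumR (map (fun s => path_prob (fun _ => 1) 1 s * regret T s) (paths T)).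

End EWF.

From Stdlib Require Import Reals List Arith Lia Lra.
From Coquelicot Require Coquelicot.
Import ListNotations.
Open Scope R_scope.

(* The signal [v_i^T S_i e_d] equals [c(i,d) - b d], so [c~(i,d)] is an unbiased
   estimate of the shifted loss [l_i = c(i,d) - b d + beta], which lies in
   [[0, 2 beta]] and differs from the cost by a term common to all arms.  Against
   the best fixed arm [istar], the potential [(ln W - ln W_istar) / eta] drops in each
   round by at least the expected cost difference minus
   [2 gamma beta + eta/2 E[sum_i q_i c~_i^2]]; the second moment is at most
   [8 beta^2 sum_i p_i / P(I >= i) <= 8 beta^2 (1 + ln (N / gamma))] by a
   telescoping tail-sum bound.  Summing over the [T] rounds, starting from the
   potential [ln N / eta], and inserting the tuned [gamma] and [eta] gives the
   bound; when [beta T < 1] the trivial bound [E R <= beta T < 1] suffices. *)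

(** * Finite sums *)

Lemma sumR_app l1 l2 : sumR (l1 ++ l2) = sumR l1 + sumR l2.
Proof. induction l1; simpl; lra. Qed.

Lemma sumR_map_add {A} (f g : A -> R) l :
  sumR (map (fun x => f x + g x) l) = sumR (map f l) + sumR (map g l).
Proof. induction l; simpl; lra. Qed.

Lemma sumR_map_scal {A} (c : R) (f : A -> R) l :
  sumR (map (fun x => c * f x) l) = c * sumR (map f l).
Proof. induction l; simpl; lra. Qed.

Lemma sumR_map_const {A} (c : R) (l : list A) :
  sumR (map (fun _ => c) l) = INR (length l) * c.
Proof. induction l; simpl length; [simpl; lra | rewrite S_INR; simpl; lra]. Qed.

Lemma sumR_map_ext {A} (f g : A -> R) l :
  (forall x, In x l -> f x = g x) -> sumR (map f l) = sumR (map g l).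
Proof. intros H; f_equal; apply map_ext_in; auto. Qed.

Lemma sumR_map_le {A} (f g : A -> R) l :
  (forall x, In x l -> f x <= g x) -> sumR (map f l) <= sumR (map g l).
Proof.
  induction l as [|a l IH]; simpl; intros H; [lra|].
  pose proof (H a (or_introl eq_refl)); pose proof (IH (fun x Hx => H x (or_intror Hx))).
  lra.
Qed.

Lemma sumR_map_nonneg {A} (f : A -> R) l :
  (forall x, In x l -> 0 <= f x) -> 0 <= sumR (map f l).
Proof.
  intros H. rewrite <- (Rmult_0_r (INR (length l))), <- sumR_map_const.
  apply sumR_map_le; auto.
Qed.

Lemma sumR_map_pos {A} (f : A -> R) l :
  (forall x, 0 < f x) -> l <> [] -> 0 < sumR (map f l).
Proof.
  intros H Hl. destruct l as [|x l]; [congruence|]. simpl.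
  pose proof (H x); pose proof (sumR_map_nonneg f l (fun y _ => Rlt_le _ _ (H y))).
  lra.
Qed.

Lemma sumR_map_ge_elem {A} (f : A -> R) l y :
  (forall x, In x l -> 0 <= f x) -> In y l -> f y <= sumR (map f l).
Proof.
  induction l as [|a l IH]; simpl; intros H Hy; [contradiction|].
  pose proof (H a (or_introl eq_refl)).
  pose proof (sumR_map_nonneg f l (fun x Hx => H x (or_intror Hx))).
  destruct Hy as [<-|Hy]; [lra|].
  pose proof (IH (fun x Hx => H x (or_intror Hx)) Hy). lra.
Qed.

Lemma sumR_map_filter {A} (f : A -> R) (P : A -> bool) l :
  sumR (map f (filter P l)) = sumR (map (fun x => if P x then f x else 0) l).
Proof. induction l; simpl; [lra|]. destruct (P a); simpl; lra. Qed.

Lemma sumR_map_flat_map {A B} (f : B -> R) (F : A -> list B) l :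
  sumR (map f (flat_map F l)) = sumR (map (fun x => sumR (map f (F x))) l).
Proof. induction l; simpl; [lra|]. rewrite map_app, sumR_app; lra. Qed.

Lemma sumR_map_exchange {A B} (F : A -> B -> R) l1 l2 :
  sumR (map (fun a => sumR (map (fun i => F a i) l2)) l1) =
  sumR (map (fun i => sumR (map (fun a => F a i) l1)) l2).
Proof.
  induction l1; simpl; [rewrite sumR_map_const; lra|].
  rewrite IHl1, <- sumR_map_add. reflexivity.
Qed.

Lemma sumR_map_remove (f : nat -> R) l m :
  NoDup l -> In m l -> sumR (map f l) = f m + sumR (map f (remove Nat.eq_dec m l)).
Proof.
  induction l as [|x l IH]; simpl; intros Hnd Hm; [contradiction|].
  inversion Hnd as [|? ? Hx Hnd']; subst.
  destruct (Nat.eq_dec m x) as [->|Hne].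
  - rewrite notin_remove; auto.
  - destruct Hm as [->|Hm]; [congruence|]. simpl. rewrite (IH Hnd' Hm). lra.
Qed.

Lemma NoDup_remove_elt l m : NoDup l -> NoDup (remove Nat.eq_dec m l).
Proof. intros Hl. rewrite <- remove_alt. apply NoDup_filter, Hl. Qed.

Lemma exists_min_nat (l : list nat) :
  l <> [] -> exists m, In m l /\ forall x, In x l -> (m <= x)%nat.
Proof.
  induction l as [|x l IH]; intros H; [congruence|].
  destruct l as [|y l'].
  - exists x; split; [left; auto|]. intros z [->|[]]; lia.
  - destruct IH as [m [Hm Hmin]]; [discriminate|].
    destruct (Compare_dec.le_lt_dec x m).
    + exists x. split; [left; auto|]. intros z [->|Hz]; [lia|]. specialize (Hmin z Hz); lia.
    + exists m. split; [right; auto|]. intros z [->|Hz]; [lia|auto].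
Qed.

Lemma minR_In l : l <> [] -> In (minR l) l.
Proof.
  induction l as [|x l IH]; intros H; [congruence|].
  destruct l as [|y l']; [left; auto|].
  change (minR (x :: y :: l')) with (Rmin x (minR (y :: l'))).
  unfold Rmin; destruct (Rle_dec x (minR (y :: l'))); [left; auto|].
  right; apply IH; discriminate.
Qed.

(** * Elementary inequalities *)

Section ExpQuadratic.
Import Coquelicot.Coquelicot.

Lemma exp_neg_le_quadratic y : 0 <= y -> exp (- y) <= 1 - y + y ^ 2 / 2.
Proof.
  intros Hy. destruct (Req_dec y 0) as [->|Hy0].
  { rewrite Ropp_0, exp_0. lra. }
  destruct (MVT_cor2 (fun y => 1 - y + y ^ 2 / 2 - exp (- y))
                     (fun y => -1 + y + exp (- y)) 0 y ltac:(lra)) as [c [Hc Hc0]].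
  { intros c _. apply is_derive_Reals. auto_derive; auto. simpl. field. }
  rewrite Ropp_0, exp_0 in Hc.
  pose proof (exp_ineq1_le (- c)).
  assert (0 <= (-1 + c + exp (- c)) * (y - 0)) by (apply Rmult_le_pos; lra).
  lra.
Qed.

End ExpQuadratic.

Lemma ln_le_sub_1 x : 0 < x -> ln x <= x - 1.
Proof. intros Hx. pose proof (exp_ineq1_le (ln x)). rewrite exp_ln in H; lra. Qed.

Lemma ln_le x y : 0 < x -> x <= y -> ln x <= ln y.
Proof. intros Hx [H| ->]; [left; apply ln_increasing|]; lra. Qed.

Lemma sub_div_le_ln_sub s s' : 0 < s' <= s -> (s - s') / s <= ln s - ln s'.
Proof.
  intros Hs. pose proof (ln_le_sub_1 (s' / s) ltac:(apply Rdiv_pos_pos; lra)).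
  rewrite Rdiv_def, ln_mult, ln_Rinv in H by (try apply Rinv_0_lt_compat; lra).
  replace ((s - s') / s) with (1 - s' / s) by (field; lra). lra.
Qed.

(* [ln x <= x - 1] for the ratio of the two sums, then [exp (- y) <= 1 - y + y^2/2]
   termwise. *)
Lemma ln_sum_exp_weights_le (l : list nat) (W e : nat -> R) (eta : R) :
  (forall i, 0 < W i) -> l <> [] -> 0 <= eta -> (forall i, In i l -> 0 <= e i) ->
  ln (sumR (map (fun i => W i * exp (- eta * e i)) l)) - ln (sumR (map W l)) <=
  eta * sumR (map (fun i => W i / sumR (map W l) * (- e i + eta * e i ^ 2 / 2)) l).
Proof.
  intros HW Hne Heta He.
  set (S := sumR (map W l)). assert (HS : 0 < S) by (apply sumR_map_pos; auto).
  set (S' := sumR (map (fun i => W i * exp (- eta * e i)) l)).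
  assert (HS' : 0 < S').
  { apply sumR_map_pos; auto. intros i. apply Rmult_lt_0_compat; [apply HW | apply exp_pos]. }
  assert (Hq1 : sumR (map (fun i => / S * W i) l) = 1)
    by (rewrite sumR_map_scal; fold S; field; lra).
  assert (Hexp : S' / S <= sumR (map (fun i => / S * W i +
                   eta * (W i / S * (- e i + eta * e i ^ 2 / 2))) l)).
  { replace (S' / S) with (sumR (map (fun i => / S * (W i * exp (- eta * e i))) l))
      by (rewrite sumR_map_scal; unfold S', Rdiv; ring).
    apply sumR_map_le. intros i Hi.
    pose proof (exp_neg_le_quadratic (eta * e i) (Rmult_le_pos _ _ Heta (He i Hi))).
    assert (0 < / S) by (apply Rinv_0_lt_compat, HS).
    pose proof (HW i).
    replace (- eta * e i) with (- (eta * e i)) by ring.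
    replace (/ S * W i + eta * (W i / S * (- e i + eta * e i ^ 2 / 2)))
      with (/ S * W i * (1 - eta * e i + (eta * e i) ^ 2 / 2)) by (unfold Rdiv; ring).
    rewrite <- Rmult_assoc. apply Rmult_le_compat_l; [nra | lra]. }
  rewrite sumR_map_add, Hq1, sumR_map_scal in Hexp.
  replace (ln S' - ln S) with (ln (S' / S))
    by (rewrite Rdiv_def, ln_mult, ln_Rinv by (try apply Rinv_0_lt_compat; lra); ring).
  pose proof (ln_le_sub_1 (S' / S) ltac:(apply Rdiv_pos_pos; lra)). lra.
Qed.

(** * Tail sums *)

Definition tail_sum (l : list nat) (f : nat -> R) (i : nat) : R :=
  sumR (map (fun j => if Nat.leb i j then f j else 0) l).

Lemma tail_sum_min (l : list nat) f m :
  (forall x, In x l -> (m <= x)%nat) -> tail_sum l f m = sumR (map f l).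
Proof.
  intros Hmin. apply sumR_map_ext. intros x Hx.
  destruct (Nat.leb_spec m x); [reflexivity | specialize (Hmin x Hx); lia].
Qed.

Lemma tail_sum_remove_min (l : list nat) f m i :
  NoDup l -> In m l -> (m < i)%nat ->
  tail_sum l f i = tail_sum (remove Nat.eq_dec m l) f i.
Proof.
  intros Hnd Hm Hi. unfold tail_sum. rewrite (sumR_map_remove _ l m Hnd Hm).
  destruct (Nat.leb_spec i m); [lia | lra].
Qed.

(* Removing the least index [m] shrinks the total from [S] to [S'], and
   [f m / S = (S - S') / S <= ln S - ln S']: the bound telescopes. *)
Lemma sum_div_tail_sum_le_ln (l : list nat) (f : nat -> R) (c : R) :
  NoDup l -> l <> [] -> 0 < c -> (forall x, In x l -> c <= f x) ->
  sumR (map (fun i => f i / tail_sum l f i) l) <= 1 + ln (sumR (map f l)) - ln c.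
Proof.
  remember (length l) as n eqn:Hn. revert l Hn.
  induction n as [n IH] using lt_wf_ind; intros l Hn Hnd Hne Hc Hf.
  destruct (exists_min_nat l Hne) as [m [Hm Hmin]].
  rewrite (sumR_map_remove (fun i => f i / tail_sum l f i) l m Hnd Hm).
  rewrite tail_sum_min, (sumR_map_remove f l m Hnd Hm) by exact Hmin.
  rewrite (sumR_map_ext (fun i => f i / tail_sum l f i)
                       (fun i => f i / tail_sum (remove Nat.eq_dec m l) f i)).
  2:{ intros i Hi. apply in_remove in Hi as [Hil Him].
      rewrite (tail_sum_remove_min l f m i Hnd Hm); [reflexivity|].
      specialize (Hmin i Hil). lia. }
  assert (Hlen : (length (remove Nat.eq_dec m l) < n)%nat)
    by (subst n; apply remove_length_lt, Hm).
  pose proof (NoDup_remove_elt l m Hnd) as Hnd'.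
  assert (Hf' : forall x, In x (remove Nat.eq_dec m l) -> c <= f x)
    by (intros x Hx; apply in_remove in Hx as [Hx _]; auto).
  assert (Hfm : c <= f m) by auto.
  set (l' := remove Nat.eq_dec m l) in *. clearbody l'.
  destruct l' as [|y l''].
  - simpl. replace (f m / (f m + 0)) with 1 by (field; lra).
    pose proof (ln_le c (f m + 0) Hc ltac:(lra)). lra.
  - set (S' := sumR (map f (y :: l''))).
    assert (HS' : c <= S').
    { pose proof (Hf' y (or_introl eq_refl)).
      pose proof (sumR_map_ge_elem f (y :: l'') y
                    (fun x Hx => Rle_trans _ _ _ (Rlt_le _ _ Hc) (Hf' x Hx))
                    (or_introl eq_refl)).
      unfold S'. lra. }
    pose proof (IH _ Hlen (y :: l'') eq_refl Hnd' ltac:(discriminate) Hc Hf') as IH'.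
    pose proof (sub_div_le_ln_sub (f m + S') S' ltac:(lra)) as Hstep.
    replace (f m + S' - S') with (f m) in Hstep by ring.
    fold S' in IH'. lra.
Qed.

(** * Costs and the observed signal *)

Lemma sumR_signal_terms_zero h b i d l :
  (forall k, In k l -> Nat.min i d <> (k - 1)%nat) ->
  sumR (map (fun k => vvec h b i k * Smat i k d) l) = 0.
Proof.
  intros H. rewrite <- (Rmult_0_r (INR (length l))), <- sumR_map_const.
  apply sumR_map_ext. intros k Hk. unfold Smat.
  destruct (Nat.eqb_spec (Nat.min i d) (k - 1)); [exfalso; apply (H k Hk); auto | lra].
Qed.

(* Only the row [k = min i d + 1] of [S_i] is hit, which reads off
   [v_i (min i d + 1) = h i - (h + b) min i d]. *)
Lemma signal_cost h b i d : signal h b i d = cost h b i d - b * INR d.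
Proof.
  unfold signal. set (m := Nat.min i d).
  replace (i + 1)%nat with (m + (1 + (i - m)))%nat by (unfold m; lia).
  rewrite !seq_app, !map_app, !sumR_app.
  rewrite (sumR_signal_terms_zero _ _ _ _ (seq 1 m)),
          (sumR_signal_terms_zero _ _ _ _ (seq (1 + m + 1) (i - m))).
  2,3: intros k Hk; apply in_seq in Hk; fold m; lia.
  simpl. unfold Smat, vvec, cost. fold m. replace (S m - 1)%nat with m by lia.
  rewrite Nat.eqb_refl. unfold m. destruct (Nat.le_gt_cases i d).
  - replace (i - d)%nat with 0%nat by lia.
    rewrite Nat.min_l, minus_INR by lia. simpl. ring.
  - replace (d - i)%nat with 0%nat by lia.
    rewrite Nat.min_r, minus_INR by lia. simpl. ring.
Qed.

Lemma beta_pos D h b : (1 <= D)%nat -> 0 < h -> 0 < beta D h b.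
Proof.
  intros HD Hh. unfold beta. apply Rmult_lt_0_compat.
  - apply lt_0_INR; lia.
  - pose proof (Rmax_l h b); lra.
Qed.

Lemma cost_bounds D h b a d : 0 < h -> 0 < b -> (a <= D)%nat -> (d <= D)%nat ->
  0 <= cost h b a d <= beta D h b.
Proof.
  intros Hh Hb Ha Hd. unfold cost, beta.
  pose proof (Rmax_l h b). pose proof (Rmax_r h b).
  pose proof (pos_INR (a - d)). pose proof (pos_INR (d - a)).
  assert (INR (a - d) <= INR D) by (apply le_INR; lia).
  assert (INR (d - a) <= INR D) by (apply le_INR; lia).
  destruct (Nat.le_gt_cases a d).
  - replace (a - d)%nat with 0%nat by lia. simpl. nra.
  - replace (d - a)%nat with 0%nat by lia. simpl. nra.
Qed.

(* The loss estimated by [est_loss]: the cost shifted by [beta - b d], which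
   is the same for every arm and therefore cancels in the regret. *)
Definition shifted_loss D h b i d := signal h b i d + beta D h b.

Lemma shifted_loss_bounds D h b a d : 0 < h -> 0 < b -> (a <= D)%nat -> (d <= D)%nat ->
  0 <= shifted_loss D h b a d <= 2 * beta D h b.
Proof.
  intros Hh Hb Ha Hd. unfold shifted_loss. rewrite signal_cost.
  pose proof (cost_bounds D h b a d Hh Hb Ha Hd).
  assert (b * INR d <= beta D h b).
  { unfold beta. pose proof (Rmax_r h b).
    assert (INR d <= INR D) by (apply le_INR; lia).
    pose proof (pos_INR d). nra. }
  pose proof (pos_INR d). nra.
Qed.

Lemma cost_sub_shifted_loss D h b a i d :
  cost h b a d - cost h b i d = shifted_loss D h b a d - shifted_loss D h b i d.
Proof. unfold shifted_loss. rewrite !signal_cost. ring. Qed.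

(** * The exponentially weighted forecaster *)

Definition positive_weights (W : nat -> R) := forall i, 0 < W i.

Fixpoint path_sum (g : nat -> nat -> R) (t : nat) (s : list nat) : R :=
  match s with [] => 0 | a :: s' => g t a + path_sum g (S t) s' end.

Lemma paths_length (Iset : list nat) n s : In s (paths Iset n) -> length s = n.
Proof.
  revert s. induction n as [|n IH]; simpl; intros s Hs.
  - destruct Hs as [<-|[]]; reflexivity.
  - apply in_flat_map in Hs as [a [_ Hs]]. apply in_map_iff in Hs as [s' [<- Hs']].
    simpl. rewrite (IH s' Hs'). reflexivity.
Qed.

Lemma path_cost_sub_const h b dem istar s t :
  path_cost h b dem t s - sumR (map (fun t => cost h b istar (dem t)) (seq t (length s))) =
  path_sum (fun t a => cost h b a (dem t) - cost h b istar (dem t)) t s.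
Proof. revert t. induction s as [|a s IH]; intros t; simpl; [lra|]. rewrite <- IH. lra. Qed.

Section Policy.
Variables (D : nat) (h b : R) (Iset : list nat) (dem : nat -> nat) (eta gamma : R).
Hypothesis Iset_nonempty : Iset <> [].
Hypothesis gamma_range : 0 < gamma <= 1.

Lemma Nn_pos : 0 < Nn Iset.
Proof. unfold Nn. destruct Iset; [congruence|]. apply lt_0_INR; simpl; lia. Qed.

Lemma Wsum_pos W : positive_weights W -> 0 < Wsum Iset W.
Proof. intros HW. apply sumR_map_pos; auto. Qed.

Lemma prob_arm_lb W a : positive_weights W -> gamma / Nn Iset <= prob_arm Iset gamma W a.
Proof.
  intros HW. unfold prob_arm. pose proof (Wsum_pos W HW). pose proof (HW a).
  assert (0 <= W a / Wsum Iset W) by (apply Rle_mult_inv_pos; lra).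
  nra.
Qed.

Lemma prob_arm_nonneg W a : positive_weights W -> 0 <= prob_arm Iset gamma W a.
Proof.
  intros HW. pose proof (prob_arm_lb W a HW). pose proof Nn_pos.
  assert (0 <= gamma / Nn Iset) by (apply Rle_mult_inv_pos; lra). lra.
Qed.

Lemma sum_prob_arm W : positive_weights W -> sumR (map (prob_arm Iset gamma W) Iset) = 1.
Proof.
  intros HW. unfold prob_arm.
  rewrite (sumR_map_add (fun x => (1 - gamma) * (W x / Wsum Iset W)) (fun _ => gamma / Nn Iset)).
  rewrite sumR_map_const, sumR_map_scal.
  rewrite (sumR_map_ext _ (fun x => / Wsum Iset W * W x)) by (intros; unfold Rdiv; ring).
  rewrite sumR_map_scal. fold (Wsum Iset W).
  pose proof (Wsum_pos W HW) as HS. pose proof Nn_pos as HN. unfold Nn in HN |- *.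
  field. lra.
Qed.

Lemma update_positive W a d :
  positive_weights W -> positive_weights (update D h b Iset eta gamma W a d).
Proof. intros HW i. apply Rmult_lt_0_compat; [apply HW | apply exp_pos]. Qed.

Lemma Pge_tail_sum W i : Pge Iset gamma W i = tail_sum Iset (prob_arm Iset gamma W) i.
Proof. apply sumR_map_filter. Qed.

Lemma Pge_pos W i : positive_weights W -> In i Iset -> 0 < Pge Iset gamma W i.
Proof.
  intros HW Hi. rewrite Pge_tail_sum.
  assert (Hle : prob_arm Iset gamma W i <= tail_sum Iset (prob_arm Iset gamma W) i).
  { unfold tail_sum.
    replace (prob_arm Iset gamma W i)
      with ((fun j => if Nat.leb i j then prob_arm Iset gamma W j else 0) i)
      by (cbn beta; rewrite Nat.leb_refl; reflexivity).
    apply (sumR_map_ge_elem (fun j => if Nat.leb i j then prob_arm Iset gamma W j else 0));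
      [|exact Hi].
    intros j _. destruct (Nat.leb i j); [apply prob_arm_nonneg, HW | lra]. }
  pose proof (prob_arm_lb W i HW).
  assert (0 < gamma / Nn Iset) by (apply Rdiv_pos_pos; [lra | apply Nn_pos]). lra.
Qed.

Lemma sum_prob_arm_indicator W i y :
  sumR (map (fun a => prob_arm Iset gamma W a * (if Nat.leb i a then y else 0)) Iset) =
  y * Pge Iset gamma W i.
Proof.
  rewrite Pge_tail_sum. unfold tail_sum. rewrite <- sumR_map_scal.
  apply sumR_map_ext. intros a _. destruct (Nat.leb i a); ring.
Qed.

Lemma est_loss_mean W d i : positive_weights W -> In i Iset ->
  sumR (map (fun a => prob_arm Iset gamma W a * est_loss D h b Iset gamma W a d i) Iset) =
  shifted_loss D h b i d.
Proof.
  intros HW Hi. pose proof (Pge_pos W i HW Hi).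
  rewrite (sumR_map_ext _ (fun a => prob_arm Iset gamma W a *
             (if Nat.leb i a then shifted_loss D h b i d / Pge Iset gamma W i else 0))).
  - rewrite sum_prob_arm_indicator. field. lra.
  - intros a _. unfold est_loss, shifted_loss. destruct (Nat.leb i a); field; lra.
Qed.

Lemma est_loss_second_moment W d i : positive_weights W -> In i Iset ->
  sumR (map (fun a => prob_arm Iset gamma W a * est_loss D h b Iset gamma W a d i ^ 2) Iset) =
  shifted_loss D h b i d ^ 2 / Pge Iset gamma W i.
Proof.
  intros HW Hi. pose proof (Pge_pos W i HW Hi).
  rewrite (sumR_map_ext _ (fun a => prob_arm Iset gamma W a *
             (if Nat.leb i a then shifted_loss D h b i d ^ 2 / Pge Iset gamma W i ^ 2 else 0))).
  - rewrite sum_prob_arm_indicator. field. lra.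
  - intros a _. unfold est_loss, shifted_loss. destruct (Nat.leb i a); field; lra.
Qed.

Definition path_expect (W : nat -> R) (t n : nat) (f : list nat -> R) : R :=
  sumR (map (fun s => path_prob D h b Iset dem eta gamma W t s * f s) (paths Iset n)).

Lemma path_expect_S W t n f :
  path_expect W t (S n) f =
  sumR (map (fun a => prob_arm Iset gamma W a *
    path_expect (update D h b Iset eta gamma W a (dem t)) (S t) n (fun s => f (a :: s))) Iset).
Proof.
  unfold path_expect. simpl paths. rewrite sumR_map_flat_map. apply sumR_map_ext.
  intros a _. rewrite map_map, <- sumR_map_scal. apply sumR_map_ext. intros s _.
  simpl. ring.
Qed.

Lemma path_expect_add_const n : forall W t c f, positive_weights W ->
  path_expect W t n (fun s => c + f s) = c + path_expect W t n f.
Proof.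
  induction n as [|n IH]; intros W t c f HW.
  - unfold path_expect. simpl. ring.
  - rewrite !path_expect_S.
    rewrite (sumR_map_ext _ (fun a => c * prob_arm Iset gamma W a +
       prob_arm Iset gamma W a *
       path_expect (update D h b Iset eta gamma W a (dem t)) (S t) n (fun s => f (a :: s)))).
    + rewrite sumR_map_add, sumR_map_scal, sum_prob_arm by exact HW. ring.
    + intros a _. rewrite IH by (apply update_positive, HW). ring.
Qed.

Lemma path_expect_path_sum_le (g : nat -> nat -> R) (Phi : (nat -> R) -> R) (C : R)
    (t_start t_end : nat) :
  (forall W, positive_weights W -> 0 <= Phi W) ->
  (forall W t, positive_weights W -> (t_start <= t < t_end)%nat ->
     sumR (map (fun a => prob_arm Iset gamma W a *
       (g t a + Phi (update D h b Iset eta gamma W a (dem t)))) Iset) <= C + Phi W) ->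
  forall n t W, positive_weights W -> (t_start <= t)%nat -> (t + n <= t_end)%nat ->
    path_expect W t n (path_sum g t) <= INR n * C + Phi W.
Proof.
  intros HPhi Hround n. induction n as [|n IH]; intros t W HW Ht Htn.
  - unfold path_expect. simpl. pose proof (HPhi W HW). lra.
  - rewrite path_expect_S. simpl path_sum.
    eapply Rle_trans.
    { apply sumR_map_le. intros a _.
      rewrite path_expect_add_const by (apply update_positive, HW).
      apply Rmult_le_compat_l; [apply prob_arm_nonneg, HW|].
      apply Rplus_le_compat_l, IH; [apply update_positive, HW | lia | lia]. }
    rewrite (sumR_map_ext _ (fun a => prob_arm Iset gamma W a *
        (g t a + Phi (update D h b Iset eta gamma W a (dem t))) +
        INR n * C * prob_arm Iset gamma W a)) by (intros; ring).
    rewrite sumR_map_add, sumR_map_scal, sum_prob_arm by exact HW.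
    specialize (Hround W t HW ltac:(lia)). rewrite S_INR. lra.
Qed.

Definition potential (istar : nat) (W : nat -> R) : R :=
  (ln (Wsum Iset W) - ln (W istar)) / eta.

Lemma potential_nonneg istar W :
  0 < eta -> In istar Iset -> positive_weights W -> 0 <= potential istar W.
Proof.
  intros Heta Histar HW. unfold potential. apply Rle_mult_inv_pos; [|exact Heta].
  assert (W istar <= Wsum Iset W)
    by (apply sumR_map_ge_elem; [intros i _; apply Rlt_le, HW | exact Histar]).
  pose proof (ln_le (W istar) (Wsum Iset W) (HW istar) H). lra.
Qed.

Section Bounds.
Hypothesis D_pos : (1 <= D)%nat.
Hypothesis h_pos : 0 < h.
Hypothesis b_pos : 0 < b.
Hypothesis Iset_NoDup : NoDup Iset.
Hypothesis Iset_le_D : forall i, In i Iset -> (i <= D)%nat.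

Lemma est_loss_nonneg W a d i : positive_weights W -> In i Iset -> (d <= D)%nat ->
  0 <= est_loss D h b Iset gamma W a d i.
Proof.
  intros HW Hi Hd. unfold est_loss. fold (shifted_loss D h b i d).
  pose proof (shifted_loss_bounds D h b i d h_pos b_pos (Iset_le_D i Hi) Hd).
  pose proof (Pge_pos W i HW Hi).
  destruct (Nat.leb i a); [|lra].
  apply Rmult_le_pos; [apply Rle_mult_inv_pos|]; lra.
Qed.

Section OneRound.
Variables (istar d : nat) (W : nat -> R).
Hypothesis istar_in : In istar Iset.
Hypothesis d_le_D : (d <= D)%nat.
Hypothesis eta_pos : 0 < eta.
Hypothesis gamma_le_half : gamma <= 1 / 2.
Hypothesis W_pos : positive_weights W.

Lemma weight_share_le_2_prob_arm i : W i / Wsum Iset W <= 2 * prob_arm Iset gamma W i.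
Proof.
  unfold prob_arm. pose proof (Wsum_pos W W_pos). pose proof (W_pos i). pose proof Nn_pos.
  assert (0 <= gamma / Nn Iset) by (apply Rle_mult_inv_pos; lra).
  assert (0 <= W i / Wsum Iset W) by (apply Rle_mult_inv_pos; lra).
  nra.
Qed.

(* [p = (1 - gamma) q + gamma / N], so the difference is [gamma] times a
   difference of two averages of values in [[0, 2 beta]]. *)
Lemma exploration_cost_le :
  sumR (map (fun a => prob_arm Iset gamma W a * shifted_loss D h b a d) Iset) -
  sumR (map (fun i => W i / Wsum Iset W * shifted_loss D h b i d) Iset) <=
  2 * gamma * beta D h b.
Proof.
  set (l := fun i => shifted_loss D h b i d).
  assert (Hl : forall i, In i Iset -> 0 <= l i <= 2 * beta D h b)
    by (intros i Hi; apply shifted_loss_bounds; auto).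
  unfold prob_arm.
  rewrite (sumR_map_ext _ (fun a => (1 - gamma) * (W a / Wsum Iset W * l a) + gamma / Nn Iset * l a))
    by (intros; unfold l; ring).
  rewrite sumR_map_add, !sumR_map_scal.
  assert (0 <= sumR (map (fun i => W i / Wsum Iset W * l i) Iset)).
  { apply sumR_map_nonneg. intros i Hi. pose proof (Wsum_pos W W_pos). pose proof (W_pos i).
    apply Rmult_le_pos; [apply Rle_mult_inv_pos; lra | apply Hl, Hi]. }
  assert (Hsum : sumR (map l Iset) <= Nn Iset * (2 * beta D h b)).
  { unfold Nn. rewrite <- sumR_map_const. apply sumR_map_le. intros; apply Hl; auto. }
  pose proof Nn_pos.
  assert (gamma / Nn Iset * sumR (map l Iset) <= 2 * gamma * beta D h b).
  { replace (2 * gamma * beta D h b) with (gamma / Nn Iset * (Nn Iset * (2 * beta D h b)))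
      by (field; lra).
    apply Rmult_le_compat_l; [apply Rle_mult_inv_pos|]; lra. }
  change (fun i => W i / Wsum Iset W * shifted_loss D h b i d)
    with (fun i => W i / Wsum Iset W * l i).
  nra.
Qed.

(* [q_i <= 2 p_i] and [l_i <= 2 beta] reduce the bound to [sum_i p_i / P(I >= i)],
   which the tail-sum logarithm bound controls since [p_i >= gamma / N]. *)
Lemma weighted_second_moment_le :
  sumR (map (fun i => W i / Wsum Iset W *
    (shifted_loss D h b i d ^ 2 / Pge Iset gamma W i)) Iset) <=
  8 * beta D h b ^ 2 * (1 - ln (gamma / Nn Iset)).
Proof.
  set (bt := beta D h b). pose proof (beta_pos D h b D_pos h_pos) as Hbt. fold bt in Hbt.
  eapply Rle_trans.
  { apply (sumR_map_le _ (fun i => 8 * bt ^ 2 * (prob_arm Iset gamma W i / Pge Iset gamma W i))).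
    intros i Hi.
    pose proof (Pge_pos W i W_pos Hi).
    pose proof (shifted_loss_bounds D h b i d h_pos b_pos (Iset_le_D i Hi) d_le_D).
    pose proof (weight_share_le_2_prob_arm i).
    pose proof (Wsum_pos W W_pos). pose proof (W_pos i).
    assert (0 <= W i / Wsum Iset W) by (apply Rle_mult_inv_pos; lra).
    assert (0 < / Pge Iset gamma W i) by (apply Rinv_0_lt_compat; lra).
    assert (shifted_loss D h b i d ^ 2 <= 4 * bt ^ 2) by (unfold bt; nra).
    assert (W i / Wsum Iset W * shifted_loss D h b i d ^ 2 <=
            2 * prob_arm Iset gamma W i * (4 * bt ^ 2))
      by (apply Rmult_le_compat; try lra; nra).
    unfold Rdiv in *. nra. }
  rewrite sumR_map_scal. apply Rmult_le_compat_l; [nra|].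
  rewrite (sumR_map_ext _ (fun i => prob_arm Iset gamma W i / tail_sum Iset (prob_arm Iset gamma W) i))
    by (intros; rewrite Pge_tail_sum; reflexivity).
  eapply Rle_trans.
  { apply (sum_div_tail_sum_le_ln _ _ (gamma / Nn Iset)); auto.
    - apply Rdiv_pos_pos; [lra | apply Nn_pos].
    - intros x _. apply prob_arm_lb, W_pos. }
  rewrite sum_prob_arm, ln_1 by exact W_pos. lra.
Qed.

Lemma potential_update_le a :
  potential istar (update D h b Iset eta gamma W a d) <=
  potential istar W + est_loss D h b Iset gamma W a d istar +
  sumR (map (fun i => W i / Wsum Iset W *
    (- est_loss D h b Iset gamma W a d i + eta * est_loss D h b Iset gamma W a d i ^ 2 / 2)) Iset).
Proof.
  set (e := est_loss D h b Iset gamma W a d).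
  pose proof (ln_sum_exp_weights_le Iset W e eta W_pos Iset_nonempty (Rlt_le _ _ eta_pos)
                (fun i Hi => est_loss_nonneg W a d i W_pos Hi d_le_D)) as Hexp.
  fold (Wsum Iset W) in Hexp.
  set (X := sumR (map (fun i => W i / Wsum Iset W * (- e i + eta * e i ^ 2 / 2)) Iset)) in *.
  unfold potential, update. fold e.
  change (Wsum Iset (fun i => W i * exp (- eta * e i)))
    with (sumR (map (fun i => W i * exp (- eta * e i)) Iset)).
  rewrite ln_mult, ln_exp by (apply W_pos || apply exp_pos).
  set (A := ln (sumR (map (fun i => W i * exp (- eta * e i)) Iset))) in *.
  assert ((A - ln (Wsum Iset W)) / eta <= X).
  { apply (Rmult_le_reg_l eta); [exact eta_pos|].
    replace (eta * ((A - ln (Wsum Iset W)) / eta)) with (A - ln (Wsum Iset W)) by (field; lra).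
    exact Hexp. }
  replace ((A - (ln (W istar) + - eta * e istar)) / eta)
    with ((A - ln (Wsum Iset W)) / eta + (ln (Wsum Iset W) - ln (W istar)) / eta + e istar)
    by (field; lra).
  lra.
Qed.

Lemma mean_hedge_increment :
  sumR (map (fun a => prob_arm Iset gamma W a *
    sumR (map (fun i => W i / Wsum Iset W *
      (- est_loss D h b Iset gamma W a d i + eta * est_loss D h b Iset gamma W a d i ^ 2 / 2))
      Iset)) Iset) =
  sumR (map (fun i => W i / Wsum Iset W *
    (- shifted_loss D h b i d + eta / 2 * (shifted_loss D h b i d ^ 2 / Pge Iset gamma W i))) Iset).
Proof.
  set (p := prob_arm Iset gamma W). set (e := est_loss D h b Iset gamma W).
  set (q := fun i => W i / Wsum Iset W).
  rewrite (sumR_map_ext _ (fun a => sumR (map (fun i =>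
      p a * (q i * (- e a d i + eta * e a d i ^ 2 / 2))) Iset)))
    by (intros; rewrite <- sumR_map_scal; reflexivity).
  rewrite sumR_map_exchange. apply sumR_map_ext. intros i Hi.
  rewrite (sumR_map_ext (fun a => p a * (q i * (- e a d i + eta * e a d i ^ 2 / 2)))
     (fun a => (- q i) * (p a * e a d i) + (q i * eta / 2) * (p a * e a d i ^ 2)))
    by (intros; field).
  rewrite sumR_map_add, !sumR_map_scal. unfold p, e.
  rewrite est_loss_mean, est_loss_second_moment by assumption.
  pose proof (Pge_pos W i W_pos Hi). pose proof (Wsum_pos W W_pos).
  unfold q. field. lra.
Qed.

Lemma one_round_bound :
  sumR (map (fun a => prob_arm Iset gamma W a *
    ((cost h b a d - cost h b istar d) +
     potential istar (update D h b Iset eta gamma W a d))) Iset) <=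
  (2 * gamma * beta D h b + 4 * eta * beta D h b ^ 2 * (1 - ln (gamma / Nn Iset))) +
  potential istar W.
Proof.
  set (p := prob_arm Iset gamma W).
  set (l := fun i => shifted_loss D h b i d).
  set (e := est_loss D h b Iset gamma W).
  set (X := fun a => sumR (map (fun i => W i / Wsum Iset W * (- e a d i + eta * e a d i ^ 2 / 2)) Iset)).
  eapply Rle_trans.
  { apply sumR_map_le. intros a _. apply Rmult_le_compat_l; [apply prob_arm_nonneg, W_pos|].
    apply Rplus_le_compat_l, potential_update_le. }
  rewrite (sumR_map_ext _ (fun a => (p a * l a + (- l istar) * p a) +
             (potential istar W * p a + (p a * X a + p a * e a d istar)))).
  2:{ intros a _. rewrite (cost_sub_shifted_loss D h b a istar d). unfold l, X, e. ring. }
  assert (Hp : sumR (map p Iset) = 1) by (apply sum_prob_arm, W_pos).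
  assert (Hmean : sumR (map (fun a => p a * e a d istar) Iset) = l istar)
    by (apply est_loss_mean; assumption).
  assert (HX : sumR (map (fun a => p a * X a) Iset) =
    (-1) * sumR (map (fun i => W i / Wsum Iset W * l i) Iset) +
    eta / 2 * sumR (map (fun i => W i / Wsum Iset W *
      (shifted_loss D h b i d ^ 2 / Pge Iset gamma W i)) Iset)).
  { rewrite <- !sumR_map_scal, <- sumR_map_add. unfold p, X, e.
    rewrite mean_hedge_increment. apply sumR_map_ext. intros i _. unfold l. ring. }
  rewrite !sumR_map_add, !sumR_map_scal, Hp, Hmean, HX.
  pose proof exploration_cost_le as Hexpl.
  pose proof weighted_second_moment_le as Hsq.
  assert (eta / 2 * sumR (map (fun i => W i / Wsum Iset W *
            (shifted_loss D h b i d ^ 2 / Pge Iset gamma W i)) Iset) <=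
          eta / 2 * (8 * beta D h b ^ 2 * (1 - ln (gamma / Nn Iset))))
    by (apply Rmult_le_compat_l; lra).
  unfold p, l in *. lra.
Qed.

End OneRound.

Variable T : nat.
Hypothesis dem_le_D : forall t, (1 <= t <= T)%nat -> (dem t <= D)%nat.

Lemma expected_regret_eq_path_expect :
  exists istar, In istar Iset /\
    expected_regret D h b Iset dem eta gamma T =
    path_expect (fun _ => 1) 1 T
      (path_sum (fun t a => cost h b a (dem t) - cost h b istar (dem t)) 1).
Proof.
  set (F := fun i => sumR (map (fun t => cost h b i (dem t)) (seq 1 T))).
  assert (Hbest : In (best_cost h b Iset dem T) (map F Iset)).
  { apply minR_In. destruct Iset; [congruence | discriminate]. }
  apply in_map_iff in Hbest as [istar [Hbest Histar]].
  exists istar. split; [exact Histar|].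
  unfold expected_regret, path_expect. apply sumR_map_ext. intros s Hs.
  unfold regret. rewrite <- Hbest. unfold F.
  rewrite <- (paths_length Iset T s Hs), path_cost_sub_const. reflexivity.
Qed.

Lemma expected_regret_le_T_beta :
  expected_regret D h b Iset dem eta gamma T <= INR T * beta D h b.
Proof.
  destruct expected_regret_eq_path_expect as [istar [Histar ->]].
  rewrite <- (Rplus_0_r (INR T * beta D h b)).
  apply (path_expect_path_sum_le _ (fun _ => 0) _ 1 (S T)); try lia.
  - intros W _. lra.
  - intros W t HW Ht.
    assert (Hdt : (dem t <= D)%nat) by (apply dem_le_D; lia).
    eapply Rle_trans.
    { apply (sumR_map_le _ (fun a => beta D h b * prob_arm Iset gamma W a)). intros a Ha.
      pose proof (cost_bounds D h b a (dem t) h_pos b_pos (Iset_le_D a Ha) Hdt).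
      pose proof (cost_bounds D h b istar (dem t) h_pos b_pos (Iset_le_D istar Histar) Hdt).
      pose proof (prob_arm_nonneg W a HW). nra. }
    rewrite sumR_map_scal, sum_prob_arm by exact HW. lra.
  - intros i. lra.
Qed.

Lemma expected_regret_le_potential :
  0 < eta -> gamma <= 1 / 2 ->
  expected_regret D h b Iset dem eta gamma T <=
  INR T * (2 * gamma * beta D h b + 4 * eta * beta D h b ^ 2 * (1 - ln (gamma / Nn Iset))) +
  ln (Nn Iset) / eta.
Proof.
  intros Heta Hgamma.
  destruct expected_regret_eq_path_expect as [istar [Histar ->]].
  replace (ln (Nn Iset) / eta) with (potential istar (fun _ => 1)).
  2:{ unfold potential, Wsum. rewrite sumR_map_const, ln_1, Rmult_1_r, Rminus_0_r. reflexivity. }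
  apply (path_expect_path_sum_le _ _ _ 1 (S T)); try lia.
  - intros W HW. apply potential_nonneg; assumption.
  - intros W t HW Ht. apply one_round_bound; auto. apply dem_le_D. lia.
  - intros i. lra.
Qed.

End Bounds.

End Policy.

(** * Tuning *)

Lemma one_le_ln_log_term (x N : R) : 0 <= x -> 1 <= N -> 1 <= ln (x * N ^ 3 + N + 2).
Proof.
  intros Hx HN. rewrite <- (ln_exp 1). apply ln_le; [apply exp_pos|].
  assert (0 <= x * N ^ 3) by (apply Rmult_le_pos; [lra | apply pow_le; lra]).
  pose proof exp_le_3. lra.
Qed.

Lemma one_div_range x : 1 < x -> 0 < 1 / x < 1.
Proof.
  intros Hx. split; [apply Rdiv_pos_pos; lra|].
  rewrite Rdiv_1_l, <- Rinv_1. apply Rinv_lt_contravar; lra.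
Qed.

Lemma tuned_eta_pos (T bt lnN L : R) :
  0 < T -> 0 < bt -> 0 < lnN -> 0 < L -> 0 < sqrt (lnN / (4 * bt ^ 2 * T * L)).
Proof.
  intros HT Hbt HlnN HL. pose proof (pow_lt bt 2 Hbt).
  apply sqrt_lt_R0, Rdiv_pos_pos; [lra|].
  apply Rmult_lt_0_compat; [apply Rmult_lt_0_compat|]; lra.
Qed.

(* [- ln (gamma / N) = ln (2 beta T N)], and [N <= N ^ 3]. *)
Lemma neg_ln_gamma_div_le (bt T N : R) :
  0 < bt -> 1 <= T -> 2 <= N ->
  - ln (1 / (2 * bt * T) / N) <= ln (2 * bt * T * N ^ 3 + N + 2).
Proof.
  intros Hbt HT HN.
  replace (1 / (2 * bt * T) / N) with (/ (2 * bt * T * N)) by (field; lra).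
  rewrite ln_Rinv, Ropp_involutive by (repeat apply Rmult_lt_0_compat; lra).
  apply ln_le; [repeat apply Rmult_lt_0_compat; lra|].
  assert (N <= N ^ 3) by (simpl; nra).
  assert (0 < 2 * bt * T) by nra.
  nra.
Qed.

Lemma regret_tuning (T bt lnN L K : R) :
  1 <= T -> 0 < bt -> 0 < lnN -> 1 <= L -> K <= 1 + L ->
  T * (2 * (1 / (2 * bt * T)) * bt + 4 * sqrt (lnN / (4 * bt ^ 2 * T * L)) * bt ^ 2 * K) +
  lnN / sqrt (lnN / (4 * bt ^ 2 * T * L)) <=
  4 * bt * sqrt (T * lnN * L) + 2 * bt * sqrt (T * lnN) + 1.
Proof.
  intros HT Hbt HlnN HL HK.
  set (gamma := 1 / (2 * bt * T)). set (eta := sqrt (lnN / (4 * bt ^ 2 * T * L))).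
  set (u := sqrt (T * lnN)). set (v := sqrt L).
  assert (Hu : 0 < u) by (apply sqrt_lt_R0; nra).
  assert (Hv : 1 <= v) by (unfold v; rewrite <- sqrt_1; apply sqrt_le_1; lra).
  assert (Huu : u * u = T * lnN) by (apply sqrt_sqrt; nra).
  assert (Hvv : v * v = L) by (apply sqrt_sqrt; lra).
  assert (HlnN_u : lnN = u * u / T) by (rewrite Huu; field; lra).
  assert (Heta : eta = u / (2 * bt * T * v)).
  { apply sqrt_lem_1.
    - apply Rle_mult_inv_pos; [lra|]. repeat apply Rmult_lt_0_compat; try apply pow_lt; lra.
    - apply Rle_mult_inv_pos; [lra|]. repeat apply Rmult_lt_0_compat; lra.
    - rewrite <- Hvv, HlnN_u. field. repeat split; lra. }
  rewrite sqrt_mult by nra. fold u v.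
  assert (E1 : T * (2 * gamma * bt) = 1) by (unfold gamma; field; lra).
  assert (E2 : lnN / eta = 2 * bt * u * v)
    by (rewrite Heta, HlnN_u; field; repeat split; lra).
  assert (E3 : T * (4 * eta * bt ^ 2 * K) = 2 * bt * u * (K / v))
    by (rewrite Heta; field; repeat split; lra).
  assert (E4 : K / v <= v + 1).
  { apply (Rmult_le_reg_r v); [lra|].
    replace (K / v * v) with K by (field; lra). nra. }
  assert (2 * bt * u * (K / v) <= 2 * bt * u * (v + 1))
    by (apply Rmult_le_compat_l; [nra | lra]).
  rewrite Rmult_plus_distr_l, E1, E2, E3. nra.
Qed.

Theorem theorem1 (T D : nat) (h b : R) (Iset : list nat) (dem : nat -> nat) :
  (1 <= T)%nat -> (1 <= D)%nat -> 0 < h -> 0 < b ->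
  NoDup Iset -> (forall i, In i Iset -> (i <= D)%nat) ->
  (2 <= length Iset)%nat ->
  (forall t, (1 <= t <= T)%nat -> (dem t <= D)%nat) ->
  2 * beta D h b * INR T > 1 ->
  let N := INR (length Iset) in
  let bt := beta D h b in
  let L := ln (2 * bt * INR T * N ^ 3 + N + 2) in
  let gamma := 1 / (2 * bt * INR T) in
  let eta := sqrt (ln N / (4 * bt ^ 2 * INR T * L)) in
  expected_regret D h b Iset dem eta gamma T
    <= 4 * bt * sqrt (INR T * ln N * L) + 2 * bt * sqrt (INR T * ln N) + 1.
Proof.
  intros HT HD Hh Hb Hnd HID HN Hdem Hbt N bt L gamma eta. fold bt in Hbt.
  assert (Hne : Iset <> []) by (intros E; rewrite E in HN; simpl in HN; lia).
  assert (Hbt0 : 0 < bt) by (apply beta_pos; auto).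
  assert (HT1 : 1 <= INR T) by (apply (le_INR 1); lia).
  assert (HN2 : 2 <= N) by (apply (le_INR 2); lia).
  pose proof (one_div_range (2 * bt * INR T) Hbt) as Hgamma. fold gamma in Hgamma.
  pose proof (sqrt_pos (INR T * ln N * L)). pose proof (sqrt_pos (INR T * ln N)).
  destruct (Rlt_le_dec (bt * INR T) 1) as [Hsmall | Hlarge].
  - assert (expected_regret D h b Iset dem eta gamma T <= INR T * bt)
      by (apply expected_regret_le_T_beta; auto; lra).
    nra.
  - assert (HlnN : 0 < ln N) by (rewrite <- ln_1; apply ln_increasing; lra).
    assert (HL : 1 <= L) by (apply one_le_ln_log_term; lra).
    pose proof (tuned_eta_pos (INR T) bt (ln N) L ltac:(lra) Hbt0 HlnN ltac:(lra)) as Heta.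
    assert (Hhalf : gamma <= 1 / 2).
    { unfold gamma. apply Rmult_le_compat_l; [lra|]. apply Rinv_le_contravar; lra. }
    eapply Rle_trans; [apply expected_regret_le_potential; auto; lra|].
    apply (regret_tuning (INR T) bt (ln N) L); auto.
    pose proof (neg_ln_gamma_div_le bt (INR T) N Hbt0 HT1 HN2) as Hlog.
    fold gamma L in Hlog. unfold Nn. fold N. lra.
Qed.
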